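(* Let $\Delta t,\Delta h>0$ satisfy $1-\frac{m\,\Delta t}{\Delta h}\log(1/\epsilon)\ge0$. Define, for real numbers $V_0,V_1,\dots,V_m$, $$G(V_0,V_1,\dots,V_m)=V_0-\Delta t\,\tilde H\Big(\Big(\tfrac{V_j-V_0}{\Delta h}\Big)_{j\in[m]}\Big).$$ Then $G$ is non-decreasing in each of its arguments $V_0,V_1,\dots,V_m$. (Consequently the scheme $V^{n+1}_{\mathbf i}=V^n_{\mathbf i}-\Delta t\,\tilde H\big(((V^n_{\mathbf i+e_j}-V^n_{\mathbf i})/\Delta h)_{j\in[m]}\big)$ on a grid of multi-indices $\mathbf i\in\mathbb Z^m$ is monotone.)
   Context: $\mathcal X$ finite, $\Delta_{\mathcal X}$ the distributions on $\mathcal X$, $\Delta_K$ the simplex on $[K]$, $D$ the KL divergence; $m\ge2$ bandits $\nu^1,\dots,\nu^m$, $\nu^i=(\nu^i_a)_{a\in[K]}$, with $\nu^i_a(x)\ge\epsilon$ for all $i,a,x$, $\epsilon\in(0,1)$. $H(p)=\min_{Q\in(\Delta_{\mathcal X})^K}\max_{w\in\Delta_K}\sum_{i=1}^m\sum_aw(a)D(Q_a\|\nu^i_a)p_i$ for $p\in\mathbb R^m$, and $\tilde H(p)=-H(p)$ (the Hamiltonian of the time-reversed equation). $e_j$ denotes the $j$-th unit multi-index. *)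

From HB Require Import structures.
From mathcomp Require Import all_boot all_order all_algebra.
From mathcomp Require Import all_classical all_reals all_analysis.
Set Implicit Arguments. Unset Strict Implicit. Unset Printing Implicit Defensive.
Import Order.TTheory GRing.Theory Num.Theory.
Local Open Scope classical_set_scope.
Local Open Scope ring_scope.

Definition is_dist (R : realType) (T : finType) (q : T -> R) : Prop :=
  (forall x, 0 <= q x) /\ \sum_(x : T) q x = 1.

Definition KL (R : realType) (T : finType) (q p : T -> R) : R :=
  \sum_(x : T) (if q x == 0 then 0 else q x * ln (q x / p x)).

Definition Hobj (R : realType) (X : finType) (K m : nat)
  (nu : 'I_m -> 'I_K -> X -> R) (p : 'I_m -> R)
  (Q : 'I_K -> X -> R) (w : 'I_K -> R) : R :=
  \sum_(i < m) \sum_(a < K) w a * KL (Q a) (nu i a) * p i.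

(* H(p) = min_{Q in (Delta_X)^K} max_{w in Delta_K} Hobj  (as inf/sup; both attained) *)
Definition Ham (R : realType) (X : finType) (K m : nat)
  (nu : 'I_m -> 'I_K -> X -> R) (p : 'I_m -> R) : R :=
  inf [set v | exists Q : 'I_K -> X -> R, (forall a, is_dist (Q a)) /\
        v = sup [set u | exists w : 'I_K -> R, is_dist w /\ u = Hobj nu p Q w]].

Definition Hamt (R : realType) (X : finType) (K m : nat)
  (nu : 'I_m -> 'I_K -> X -> R) (p : 'I_m -> R) : R := - Ham nu p.

Definition Gscheme (R : realType) (X : finType) (K m : nat)
  (nu : 'I_m -> 'I_K -> X -> R) (dt dh : R) (V0 : R) (V : 'I_m -> R) : R :=
  V0 - dt * Hamt nu (fun j => (V j - V0) / dh).

From HB Require Import structures.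
From mathcomp Require Import all_boot all_order all_algebra.
From mathcomp Require Import all_classical all_reals all_analysis.
From mathcomp Require Import ring.
Set Implicit Arguments. Unset Strict Implicit. Unset Printing Implicit Defensive.
Import Order.TTheory GRing.Theory Num.Theory.
Local Open Scope ring_scope.

(* Since every nu^i_a is bounded below by eps, each divergence D(Q_a || nu^i_a)
   lies in [0, ln (1/eps)], so the objective of H is a combination of the p_i
   with coefficients in [0, ln (1/eps)].  Hence H is non-decreasing, and raising
   every p_i by at most d raises H by at most m ln (1/eps) d.  The first fact
   gives monotonicity of G in V_1, ..., V_m; in V_0 the second one shows that the
   gain dt (V0' - V0) m ln (1/eps) / dh of the Hamiltonian term is dominated by
   the increase V0' - V0 of the leading term under the CFL condition. *)

Section ShiftedExtrema.
Local Open Scope classical_set_scope.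
Variables (R : realType) (T : Type) (P : T -> Prop).
Local Notation img f := [set u | exists t, P t /\ u = f t].

Lemma sup_img_shift (f g : T -> R) (c : R) :
  (exists t, P t) -> has_ubound (img f) ->
  (forall t, P t -> g t <= f t + c) -> sup (img g) <= sup (img f) + c.
Proof.
move=> [t0 Pt0] ubf gf; apply: ge_sup; first by exists (g t0), t0.
move=> _ [t [Pt ->]]; rewrite (le_trans (gf t Pt)) // lerD2r.
by apply: (ub_le_sup ubf); exists t.
Qed.

Lemma inf_img_shift (f g : T -> R) (c : R) :
  (exists t, P t) -> has_lbound (img g) ->
  (forall t, P t -> g t <= f t + c) -> inf (img g) <= inf (img f) + c.
Proof.
move=> [t0 Pt0] lbg gf; rewrite -lerBlDr; apply: lb_le_inf; first by exists (f t0), t0.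
move=> _ [t [Pt ->]]; rewrite lerBlDr (le_trans _ (gf t Pt)) //.
by apply: (ge_inf lbg); exists t.
Qed.

End ShiftedExtrema.

Lemma inf_sup_shift (R : realType) (A B : Type) (PA : A -> Prop) (PB : B -> Prop)
    (f g : A -> B -> R) (c M : R) :
  (exists a, PA a) -> (exists b, PB b) ->
  (forall a b, PA a -> PB b -> `|f a b| <= M) ->
  (forall a b, PA a -> PB b -> `|g a b| <= M) ->
  (forall a b, PA a -> PB b -> g a b <= f a b + c) ->
  inf [set v | exists a, PA a /\ v = sup [set u | exists b, PB b /\ u = g a b]]
  <= inf [set v | exists a, PA a /\ v = sup [set u | exists b, PB b /\ u = f a b]] + c.
Proof.
move=> neA [b0 Pb0] bf bg gf.
have ub_img h : (forall a b, PA a -> PB b -> `|h a b| <= M) ->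
    forall a, PA a -> has_ubound [set u | exists b, PB b /\ u = h a b].
  move=> bh a Pa; exists M => _ [b [Pb ->]].
  exact: le_trans (ler_norm _) (bh _ _ Pa Pb).
apply: inf_img_shift => //.
- exists (- M) => _ [a [Pa ->]].
  apply: (@le_trans _ _ (g a b0)); last by apply: (ub_le_sup (ub_img g bg a Pa)); exists b0.
  by rewrite lerNl (le_trans (ler_norm _)) // normrN; apply: bg.
- move=> a Pa; apply: sup_img_shift; [by exists b0 | exact: ub_img | by move=> b; apply: gf].
Qed.

Lemma dist_le1 (R : realType) (T : finType) (q : T -> R) (x : T) :
  is_dist q -> q x <= 1.
Proof. by move=> [q0 q1]; rewrite -q1 (bigD1 x) //= lerDl sumr_ge0. Qed.

Lemma KL_le_ln_inv (R : realType) (T : finType) (q p : T -> R) (eps : R) :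
  0 < eps -> is_dist q -> (forall x, eps <= p x) -> KL q p <= ln (1 / eps).
Proof.
move=> eps_gt0 dq p_ge; have [q_ge0 q1] := dq.
(* [L] is frozen so that rewriting with [q1] leaves the 1 of [1 / eps] alone. *)
rewrite /KL; set L := ln _; rewrite -[L]mul1r -q1 mulr_suml; apply: ler_sum => x _.
case: ifP => [/eqP -> | qx_neq0]; first by rewrite mul0r.
have qx_gt0 : 0 < q x by rewrite lt_neqAle eq_sym qx_neq0 q_ge0.
have px_gt0 : 0 < p x by apply: lt_le_trans (p_ge x).
rewrite ler_pM2l // ler_ln ?posrE ?divr_gt0 //.
rewrite ler_pdivrMr // mul1r mulrC.
by rewrite (le_trans (dist_le1 x dq)) // ler_pdivlMr // mul1r.
Qed.

(* Gibbs' inequality, from ln y <= y - 1 applied to y = p x / q x. *)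
Lemma KL_ge0 (R : realType) (T : finType) (q p : T -> R) :
  is_dist q -> is_dist p -> (forall x, 0 < p x) -> 0 <= KL q p.
Proof.
move=> [q_ge0 q1] [p_ge0 p1] p_gt0.
have -> : (0 : R) = \sum_x (q x - p x) by rewrite sumrB q1 p1 subrr.
rewrite /KL; apply: ler_sum => x _.
case: ifP => [/eqP -> | qx_neq0]; first by rewrite sub0r lerNl oppr0 p_ge0.
have qx_gt0 : 0 < q x by rewrite lt_neqAle eq_sym qx_neq0 q_ge0.
have ratio_gt0 := divr_gt0 (p_gt0 x) qx_gt0.
have ln_le : ln (p x / q x) <= p x / q x - 1.
  have := @le_ln1Dx R (p x / q x - 1); rewrite addrCA subrr addr0; apply.
  by rewrite ltrBrDl subrr.
rewrite -[q x / p x]invf_div lnV ?posrE // mulrN lerNr opprB.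
rewrite -(ler_pM2l qx_gt0) in ln_le; apply: le_trans ln_le _.
by rewrite mulrBr mulr1 mulrCA divff ?mulr1 // gt_eqF.
Qed.

Section Hamiltonian.
Variables (R : realType) (X : finType) (K m : nat).
Variables (nu : 'I_m -> 'I_K -> X -> R) (eps : R).
Hypotheses (eps_gt0 : 0 < eps) (nu_dist : forall i a, is_dist (nu i a))
  (nu_ge : forall i a x, eps <= nu i a x).
Local Notation L := (ln (1 / eps)).

Definition weighted_KL (Q : 'I_K -> X -> R) (w : 'I_K -> R) (i : 'I_m) : R :=
  \sum_a w a * KL (Q a) (nu i a).

Lemma HobjE p Q w : Hobj nu p Q w = \sum_i weighted_KL Q w i * p i.
Proof. by apply: eq_bigr => i _; rewrite /weighted_KL mulr_suml. Qed.

Lemma weighted_KL_bound Q w i : (forall a, is_dist (Q a)) -> is_dist w ->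
  0 <= weighted_KL Q w i <= L.
Proof.
move=> dQ [w_ge0 w1]; apply/andP; split.
  apply: sumr_ge0 => a _; rewrite mulr_ge0 // KL_ge0 // => x.
  exact: lt_le_trans (nu_ge i a x).
rewrite /weighted_KL; set L := ln _; rewrite -[L]mul1r -w1 mulr_suml; apply: ler_sum => a _.
by rewrite ler_wpM2l // KL_le_ln_inv.
Qed.

Lemma Hobj_shift p p' d Q w : (forall a, is_dist (Q a)) -> is_dist w ->
  0 <= d -> (forall i, p i <= p' i + d) ->
  Hobj nu p Q w <= Hobj nu p' Q w + m%:R * L * d.
Proof.
move=> dQ dw d_ge0 pp'; rewrite !HobjE.
have -> : m%:R * L * d = \sum_(i < m) L * d.
  by rewrite sumr_const card_ord mulr_natl mulrnAl.
rewrite -big_split; apply: ler_sum => i _ /=.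
have /andP[k_ge0 k_le] := weighted_KL_bound i dQ dw.
rewrite (le_trans (ler_wpM2l k_ge0 (pp' i))) // mulrDr lerD2l.
by rewrite ler_wpM2r.
Qed.

Lemma Hobj_norm p Q w : (forall a, is_dist (Q a)) -> is_dist w ->
  `|Hobj nu p Q w| <= \sum_i L * `|p i|.
Proof.
move=> dQ dw; rewrite HobjE; apply: le_trans (ler_norm_sum _ _ _) _.
apply: ler_sum => i _; have /andP[k_ge0 k_le] := weighted_KL_bound i dQ dw.
by rewrite normrM ger0_norm // ler_wpM2r.
Qed.

Hypotheses (m_gt0 : (0 < m)%N) (K_gt0 : (0 < K)%N) (eps_le1 : eps <= 1).

Lemma Ham_shift p p' d : 0 <= d -> (forall i, p i <= p' i + d) ->
  Ham nu p <= Ham nu p' + m%:R * L * d.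
Proof.
move=> d_ge0 pp'.
have L_ge0 : 0 <= L by rewrite ln_ge0 // mul1r -[1]invr1 lef_pV2 ?posrE.
have sum_ge0 q : 0 <= \sum_(i < m) L * `|q i| by rewrite sumr_ge0 // => i _; rewrite mulr_ge0.
apply: (inf_sup_shift (M := \sum_i L * `|p i| + \sum_i L * `|p' i|)).
- by exists (nu (Ordinal m_gt0)).
- exists (fun a => (a == Ordinal K_gt0)%:R); split=> [a|]; first by rewrite ler0n.
  by rewrite (bigD1 (Ordinal K_gt0)) //= big1 ?addr0 // => a /negbTE ->.
- by move=> Q w dQ dw; rewrite (le_trans (Hobj_norm p' dQ dw)) // lerDr.
- by move=> Q w dQ dw; rewrite (le_trans (Hobj_norm p dQ dw)) // lerDl.
- by move=> Q w dQ dw; apply: Hobj_shift.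
Qed.

Lemma Ham_le p p' : (forall i, p i <= p' i) -> Ham nu p <= Ham nu p'.
Proof.
move=> pp'; have := @Ham_shift p p' 0 (lexx 0).
by rewrite mulr0 addr0; apply=> i; rewrite addr0.
Qed.

End Hamiltonian.

Lemma GschemeE (R : realType) (X : finType) (K m : nat)
    (nu : 'I_m -> 'I_K -> X -> R) (dt dh V0 : R) (V : 'I_m -> R) :
  Gscheme nu dt dh V0 V = V0 + dt * Ham nu (fun j => (V j - V0) / dh).
Proof. by rewrite /Gscheme /Hamt mulrN opprK. Qed.

Theorem mainTheorem9 (R : realType) (X : finType) (K m : nat)
  (nu : 'I_m -> 'I_K -> X -> R) (eps dt dh : R) :
  (2 <= m)%N -> (0 < K)%N ->
  0 < eps < 1 ->
  (forall i a, is_dist (nu i a)) ->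
  (forall i a x, eps <= nu i a x) ->
  0 < dt -> 0 < dh ->
  0 <= 1 - (m%:R * dt / dh) * ln (1 / eps) ->
  (* non-decreasing in V_0 *)
  (forall (V0 V0' : R) (V : 'I_m -> R),
      V0 <= V0' -> Gscheme nu dt dh V0 V <= Gscheme nu dt dh V0' V) /\
  (* non-decreasing in each V_j, j in [m] *)
  (forall (j : 'I_m) (V0 : R) (V V' : 'I_m -> R),
      (forall k, k != j -> V k = V' k) -> V j <= V' j ->
      Gscheme nu dt dh V0 V <= Gscheme nu dt dh V0 V').
Proof.
move=> m_ge2 K_gt0 /andP[eps_gt0 eps_lt1] nu_dist nu_ge dt_gt0 dh_gt0 cfl.
have m_gt0 : (0 < m)%N by apply: leq_trans m_ge2.
have Ham_shift := Ham_shift eps_gt0 nu_dist nu_ge m_gt0 K_gt0 (ltW eps_lt1).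
have Ham_le := Ham_le eps_gt0 nu_dist nu_ge m_gt0 K_gt0 (ltW eps_lt1).
split=> [V0 V0' V le_V0 | j V0 V V' eqV le_Vj]; rewrite !GschemeE.
- set d := (V0' - V0) / dh.
  have d_ge0 : 0 <= d by rewrite divr_ge0 ?subr_ge0 // ltW.
  have shift : Ham nu (fun j => (V j - V0) / dh)
      <= Ham nu (fun j => (V j - V0') / dh) + m%:R * ln (1 / eps) * d.
    by apply: Ham_shift => // i; rewrite -mulrDl addrA subrK.
  apply: (@le_trans _ _ (V0 + dt * (Ham nu (fun j => (V j - V0') / dh)
      + m%:R * ln (1 / eps) * d))); first by rewrite lerD2l ler_pM2l.
  rewrite mulrDr addrA addrAC lerD2r -lerBrDl.
  have -> : dt * (m%:R * ln (1 / eps) * d) =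
    (m%:R * dt / dh * ln (1 / eps)) * (V0' - V0) by rewrite /d; ring.
  by rewrite -[leRHS]mul1r ler_wpM2r ?subr_ge0 // -subr_ge0.
- rewrite lerD2l ler_pM2l // Ham_le // => i.
  rewrite ler_pM2r ?invr_gt0 // lerD2r.
  by have [-> // | /eqV ->] := eqVneq i j.
Qed.
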